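(* Let $g\in W(\mathsf D_n)$ act on $\mathrm{Pic}(\bar X)=\bigoplus_{i=-1}^n\mathbb Z l_i$ via $\Phi$, and suppose the cyclic group $\langle g\rangle$ satisfies the (H1) condition, i.e. $\mathrm H^1(\langle g^i\rangle,\mathrm{Pic}(\bar X))=0$ for all $i$. If $\beta$ is a signed permutation cycle of $g$ with $\sigma(\beta)=-1$, then the underlying cycle $pr(\beta)$ has length at most $2$, and there is at most one such signed permutation cycle (with $\sigma(\beta)=-1$) of length $2$. Consequently, up to conjugation, $g$ is of one of the following three types: (1) $g=c_1c_2\beta_3\cdots\beta_R$; (2) $g=c_1c_2(2\ 3)\beta_3\cdots\beta_R$; (3) $g=\beta_1\cdots\beta_R$; where in each case the $\beta_i$ are signed permutation cycles, disjoint from one another and from the displayed indices, with $\sigma(\beta_i)=1$ for all $i$.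
   Context: $W(\mathsf B_n)$ is the group of signed permutations of the symbols $j^\pm$ ($j=1,\dots,n$), generated by $\mathfrak S_n$ and involutions $c_j$ exchanging $j^+,j^-$; each element is $c_{j_1}\cdots c_{j_t}\tau$, $\tau\in\mathfrak S_n$; $pr(c_{j_1}\cdots c_{j_t}\tau)=\tau$; $\sigma(c_{j_1}\cdots c_{j_t}\tau)=(-1)^t$; $W(\mathsf D_n)=\ker\sigma$. Decomposing $\tau$ into disjoint cycles $\gamma$ (including fixed points), the signed permutation cycles of $g$ are $\beta_\gamma=(\prod_{j_i\in\mathrm{supp}\,\gamma}c_{j_i})\gamma$, with $pr(\beta_\gamma)=\gamma$. $\mathrm{Pic}(\bar X)$ has basis $l_{-1},l_0,\dots,l_n$; for $g=c_{j_1}\cdots c_{j_t}\tau$ ($t$ even), $s(i)=-1$ if $i\in\{j_1,\dots,j_t\}$ else $1$, and $\Phi(g)l_0=l_0$, $\Phi(g)l_{-1}=l_{-1}+\frac t2l_0-\sum_{s(i)=-1}l_i$, and for $v\ge1$, $u=\tau^{-1}(v)$: $\Phi(g)l_v=l_u$ if $s(u)=1$, $\Phi(g)l_v=l_0-l_u$ if $s(u)=-1$. *)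

From mathcomp Require Import all_boot all_order all_fingroup all_algebra.
Set Implicit Arguments. Unset Strict Implicit. Unset Printing Implicit Defensive.
Import GRing.Theory.
Local Open Scope ring_scope.

(* Symbols j^+ / j^- : (j, true) is j^+, (j, false) is j^-.
   The symbols 1..n of the paper are the ordinals 0..n-1 of 'I_n. *)
Definition symb (n : nat) := ('I_n * bool)%type.

Section Weyl.
Variable n : nat.

Definition flip (x : symb n) : symb n := (x.1, ~~ x.2).

(* Products are MathComp's ([a * b] = first a, then b), so that
   g = c_{j1} ... c_{jt} tau means: first flip the signs at j1..jt, then tau. *)
Definition WB : {set {perm symb n}} :=
  [set g : {perm symb n} | [forall x, g (flip x) == flip (g x)]].

Definition cc (j : 'I_n) : {perm symb n} := tperm (j, true) (j, false).

Definition sw (j k : 'I_n) : {perm symb n} :=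
  tperm (j, true) (k, true) * tperm (j, false) (k, false).

(* For g = c_{j1}...c_{jt} tau : g (u^+) = tau(u)^{s(u)}. *)
Definition tau (g : {perm symb n}) (u : 'I_n) : 'I_n := (g (u, true)).1.
(* the set {j1,...,jt} = {u | s(u) = -1} *)
Definition negs (g : {perm symb n}) : {set 'I_n} :=
  [set u | ~~ (g (u, true)).2].

Definition sigma (g : {perm symb n}) : int := (-1) ^+ #|negs g|.

Definition WD : {set {perm symb n}} := [set g in WB | sigma g == 1].

(* Supports of the cycles gamma of pr(g) = tau (fixed points included). *)
Definition cyc_of (g : {perm symb n}) (u : 'I_n) : {set 'I_n} :=
  [set v | fconnect (tau g) u v].
Definition cycles (g : {perm symb n}) : {set {set 'I_n}} :=
  [set cyc_of g u | u : 'I_n].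

(* For the signed permutation cycle beta_gamma = (prod_{j in supp gamma} c_j) gamma
   with S = supp gamma: sigma(beta_gamma) and the length of pr(beta_gamma) = gamma. *)
Definition sigma_cyc (g : {perm symb n}) (S : {set 'I_n}) : int :=
  (-1) ^+ #|S :&: negs g|.
Definition len_cyc (S : {set 'I_n}) : nat := #|S|.

(* Pic(Xbar) = Z^(n+2) with basis l_{-1}, l_0, l_1, ..., l_n:
   index 0 <-> l_{-1}, index 1 <-> l_0, index k+2 <-> l_{k+1} (k : 'I_n). *)
Definition Lm1 : 'I_n.+2 := ord0.
Definition L0 : 'I_n.+2 := lift ord0 ord0.
Definition Lsym (k : 'I_n) : 'I_n.+2 := lift ord0 (lift ord0 k).
Definition e (i : 'I_n.+2) : 'cV[int]_n.+2 := delta_mx i 0.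

(* Phi(g) l_j, following the paper (t = #|negs g|).  For v >= 1, u = tau^{-1}(v)
   and s(u) are read off g^-1 (v^+) = u^{s(u)}. *)
Definition phisym (g : {perm symb n}) (v : 'I_n) : 'cV[int]_n.+2 :=
  let y := (g^-1)%g (v, true) in
  if y.2 then e (Lsym y.1) else e L0 - e (Lsym y.1).

Definition phicol (g : {perm symb n}) (j : 'I_n.+2) : 'cV[int]_n.+2 :=
  if j == Lm1 then
    e Lm1 + ((#|negs g|)./2)%:R *: e L0 - \sum_(i in negs g) e (Lsym i)
  else if j == L0 then e L0
  else \sum_(v : 'I_n | j == Lsym v) phisym g v. (* the unique v with j = Lsym v *)

Definition Phi (g : {perm symb n}) : 'M[int]_n.+2 :=
  \matrix_(i, j) phicol g j i 0.

Definition H1_vanish (G : {set {perm symb n}}) : Prop :=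
  forall f : {perm symb n} -> 'cV[int]_n.+2,
    (forall a b, a \in G -> b \in G -> f (a * b)%g = f a + Phi a *m f b) ->
    exists m : 'cV[int]_n.+2, forall a, a \in G -> f a = Phi a *m m - m.

Definition all_cyc_even (b : {perm symb n}) : Prop :=
  forall S, S \in cycles b -> sigma_cyc b S = 1.

Definition fixes_idx (b : {perm symb n}) (j : 'I_n) : Prop :=
  b (j, true) = (j, true) /\ b (j, false) = (j, false).

End Weyl.

From mathcomp Require Import all_boot all_order all_fingroup all_algebra.
From mathcomp Require Import zify.
Set Implicit Arguments. Unset Strict Implicit. Unset Printing Implicit Defensive.
Import GRing.Theory.
Local Open Scope ring_scope.

(* A signed cycle of g with support S and sigma = -1 is flipped by g^|S|:
   this power sends j^+ to j^- for every j in S.  Flips obstruct H^1 = 0.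
   Let h flip some p in T and some q outside T, where T is stable under pr(h)
   and contains an even number of the indices j_1, ..., j_t of h.  Then
   a |-> (Phi(a) l_T - l_T) / 2 is a crossed homomorphism on <h>; if it were
   principal, with coboundary m, then x = l_T - 2m would be fixed by Phi(h).
   A fixed vector satisfies 2 x_j + x_{-1} = 0 at every flipped index j,
   which fails for j = p, q since x_p is odd and x_q is even.
   This applies to g^|S| when a negative cycle S has three indices, to g^2
   when there are two negative cycles of length 2, and to g itself (T the
   union of two negative cycles) when there are three negative cycles.  As
   sigma(g) = 1 the number of negative cycles is even, hence 0 or 2, and
   splitting them off as c_i c_j or c_i c_j (j k) gives the three types. *)

Section SignedPermutations.
Variable n : nat.
Implicit Types (g h : {perm symb n}) (u v w : 'I_n) (x : symb n).

Lemma flipK : involutive (@flip n).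
Proof. by case=> u c; rewrite /flip negbK. Qed.

Lemma WBP g : reflect (forall x, g (flip x) = flip (g x)) (g \in WB n).
Proof. by rewrite inE; apply: (iffP forallP) => gf x; apply/eqP. Qed.

Lemma group_set_WB : group_set (WB n).
Proof.
apply/andP; split; first by apply/WBP => x; rewrite !perm1.
apply/subsetP => _ /mulsgP[g h /WBP gf /WBP hf ->].
by apply/WBP => x; rewrite !permM gf hf.
Qed.

Canonical WB_group := Group group_set_WB.

Lemma WB_flip g x : g \in WB n -> g (flip x) = flip (g x).
Proof. by move/WBP. Qed.

Lemma permWB_true g u : g (u, true) = (tau g u, ~~ (u \in negs g)).
Proof. by rewrite inE negbK /tau; case: (g (u, true)). Qed.

Lemma permWB g u c : g \in WB n -> g (u, c) = (tau g u, c != (u \in negs g)).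
Proof.
move=> gB; case: c; first by rewrite permWB_true.
by rewrite -[(u, false)]/(flip (u, true)) WB_flip // permWB_true /flip /= negbK.
Qed.

Lemma permWB_eq g h u c : g \in WB n -> h \in WB n ->
  g (u, true) = h (u, true) -> g (u, c) = h (u, c).
Proof.
move=> gB hB E; case: c => //.
by rewrite -[(u, false)]/(flip (u, true)) !WB_flip // E.
Qed.

Lemma tau_inj g : g \in WB n -> injective (tau g).
Proof.
move=> gB u w tuw; suff: g (u, true) = g (w, (u \in negs g) == (w \in negs g)).
  by move/perm_inj => [].
by rewrite !permWB // tuw; case: (u \in negs g); case: (w \in negs g).
Qed.

Lemma ccE j u c : cc j (u, c) = (u, if u == j then ~~ c else c).
Proof. by rewrite /cc !permE /= !xpair_eqE; have [->|] := eqVneq u j; case: c. Qed.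

Lemma swE j k u c :
  sw j k (u, c) = (if u == j then k else if u == k then j else u, c).
Proof.
rewrite /sw permM !permE /= !xpair_eqE.
have [uj|uj] := eqVneq u j; have [uk|uk] := eqVneq u k; subst; case: c => /=;
  by rewrite ?andbT ?andbF ?eqxx ?(negbTE uj) ?(negbTE uk) //= ?xpair_eqE
             ?andbT ?andbF ?eqxx ?(negbTE uj) ?(negbTE uk).
Qed.

Lemma cc_WB j : cc j \in WB n.
Proof. by apply/WBP => [[u c]]; rewrite /flip !ccE /=; case: (u == j). Qed.

Lemma sw_WB j k : sw j k \in WB n.
Proof. by apply/WBP => [[u c]]; rewrite /flip !swE. Qed.

End SignedPermutations.

Section Cycles.
Variable n : nat.
Implicit Types (g h : {perm symb n}) (u v w : 'I_n) (S : {set 'I_n}).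

Lemma cyc_of_id g u : u \in cyc_of g u.
Proof. by rewrite inE connect0. Qed.

Lemma cyc_of_tau g u v : g \in WB n -> (tau g v \in cyc_of g u) = (v \in cyc_of g u).
Proof. by move=> gB; rewrite !inE -same_fconnect1_r //; apply: tau_inj. Qed.

Lemma cyc_of_eq g u v : g \in WB n -> v \in cyc_of g u -> cyc_of g v = cyc_of g u.
Proof.
move=> gB; rewrite inE => uv; apply/setP => w; rewrite !inE.
apply/idP/idP => [|uw]; first exact: connect_trans.
by rewrite fconnect_sym in uv; [apply: connect_trans uw | apply: tau_inj].
Qed.

Lemma cycles_mono g S : g \in WB n -> S \in cycles g ->
  {mono tau g : v / v \in S}.
Proof. by move=> gB /imsetP[u _ ->] v; apply: cyc_of_tau. Qed.

Lemma cycles_eq g S1 S2 w : g \in WB n -> S1 \in cycles g -> S2 \in cycles g ->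
  w \in S1 -> w \in S2 -> S1 = S2.
Proof.
move=> gB /imsetP[u1 _ ->] /imsetP[u2 _ ->] w1 w2.
by rewrite -(cyc_of_eq gB w1) -(cyc_of_eq gB w2).
Qed.

Lemma cycles_disjoint g S1 S2 : g \in WB n -> S1 \in cycles g -> S2 \in cycles g ->
  S1 != S2 -> [disjoint S1 & S2].
Proof.
move=> gB C1 C2; apply: contraNT => /pred0Pn[w /andP[w1 w2]].
by rewrite (cycles_eq gB C1 C2 w1 w2).
Qed.

Lemma cyc_of_fixed g u : tau g u = u -> cyc_of g u = [set u].
Proof.
move=> fu; apply/setP => v; rewrite !inE.
apply/idP/eqP => [/iter_findex <-|<-]; last exact: connect0.
by elim: (findex _ u v) => //= k ->.
Qed.

End Cycles.

Lemma count_mem_orbit (T : finType) (f : T -> T) x (A : {set T}) :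
  count (mem A) (traject f x (fingraph.order f x)) = #|[set y | fconnect f x y] :&: A|.
Proof.
rewrite -size_filter -/(fingraph.orbit f x).
have /card_uniqP <- := filter_uniq (mem A) (fingraph.orbit_uniq f x).
by apply: eq_card => y; rewrite !inE mem_filter fconnect_orbit andbC.
Qed.

Section CyclePowers.
Variable n : nat.
Implicit Types (g : {perm symb n}) (u w : 'I_n).

Lemma iter_perm_sign g k u c : g \in WB n ->
  iter k g (u, c) =
  (iter k (tau g) u, c (+) odd (count (mem (negs g)) (traject (tau g) u k))).
Proof.
move=> gB; elim: k => [|k IH]; first by rewrite /= addbF.
rewrite iterS IH permWB // trajectSr -cats1 count_cat /= addn0 oddD oddb.
by rewrite negb_eqb addbA.
Qed.

Lemma card_cyc_of g u : #|cyc_of g u| = fingraph.order (tau g) u.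
Proof. by rewrite cardsE. Qed.

Lemma perm_cycle_length g u w c : g \in WB n -> w \in cyc_of g u ->
  (g ^+ #|cyc_of g u|)%g (w, c) = (w, c (+) odd #|cyc_of g u :&: negs g|).
Proof.
move=> gB /(cyc_of_eq gB) <-.
rewrite permX iter_perm_sign // card_cyc_of count_mem_orbit iter_order //.
exact: tau_inj.
Qed.

End CyclePowers.

Section PicardAction.
Variable n : nat.
Implicit Types (a b h : {perm symb n}) (u v w : 'I_n) (T : {set 'I_n}).
Implicit Types (x m : 'cV[int]_n.+2).

Lemma Lsym_inj : injective (@Lsym n).
Proof. by move=> u w /lift_inj /lift_inj. Qed.

Lemma eE (i j : 'I_n.+2) : e j i 0 = (i == j)%:R.
Proof. by rewrite mxE eqxx andbT. Qed.

Lemma Phi_e a j : Phi a *m e j = phicol a j.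
Proof. by apply/matrixP => i k; rewrite (ord1 k) -colE !mxE. Qed.

Lemma Phi_L0 a : Phi a *m e (L0 n) = e (L0 n).
Proof. by rewrite Phi_e. Qed.

Lemma Phi_Lsym a u : Phi a *m e (Lsym u) = phisym a u.
Proof.
rewrite Phi_e /phicol.
have [-> ->] : (Lsym u == Lm1 n) = false /\ (Lsym u == L0 n) = false by [].
by rewrite (big_pred1 u) // => v; apply: (inj_eq Lsym_inj).
Qed.

Lemma phisymM a b u : a \in WB n -> phisym (a * b)%g u = Phi a *m phisym b u.
Proof.
move=> aB; rewrite /phisym invMg permM; case: ((b^-1)%g (u, true)) => p [].
  by rewrite Phi_Lsym.
rewrite -[(p, false)]/(flip (p, true)) WB_flip ?groupV //.
rewrite mulmxBr Phi_L0 Phi_Lsym /phisym.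
by case: ((a^-1)%g (p, true)) => q [] //=; rewrite subKr.
Qed.

Definition lsum T : 'cV[int]_n.+2 := \sum_(w in T) e (Lsym w).

Lemma lsum_Lsym T p : lsum T (Lsym p) 0 = (p \in T)%:R.
Proof.
rewrite summxE (eq_bigr (fun w => (w == p)%:R)) => [|w _]; last first.
  by rewrite eE (inj_eq Lsym_inj) eq_sym.
have [pT|pT] := boolP (p \in T).
  by rewrite (bigD1 p) //= eqxx big1 ?addr0 // => w /andP[_ /negbTE ->].
by rewrite big1 // => w wT; case: eqP => // wp; rewrite -wp wT in pT.
Qed.

Lemma Phi_lsumM a b T : a \in WB n ->
  Phi (a * b)%g *m lsum T = Phi a *m (Phi b *m lsum T).
Proof.
by move=> aB; rewrite !mulmx_sumr; apply: eq_bigr => w _; rewrite !Phi_Lsym phisymM.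
Qed.

Lemma Phi1_lsum T : Phi 1%g *m lsum T = lsum T.
Proof.
rewrite mulmx_sumr; apply: eq_bigr => w _.
by rewrite Phi_Lsym /phisym invg1 perm1.
Qed.

Lemma phisym_tau h u : h \in WB n ->
  phisym h (tau h u) = if u \in negs h then e (L0 n) - e (Lsym u) else e (Lsym u).
Proof.
move=> hB; rewrite /phisym.
have <- : h (u, ~~ (u \in negs h)) = (tau h u, true).
  by rewrite permWB //; case: (u \in negs h).
by rewrite permK; case: (u \in negs h).
Qed.

Lemma Phi_lsum h T : h \in WB n -> {mono tau h : u / u \in T} ->
  Phi h *m lsum T = lsum T + e (L0 n) *+ #|T :&: negs h| - lsum (T :&: negs h) *+ 2.
Proof.
move=> hB hT; rewrite mulmx_sumr (reindex_inj (tau_inj hB)) /=.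
under eq_bigl do rewrite hT.
under eq_bigr => u _ do rewrite Phi_Lsym phisym_tau //.
rewrite (eq_bigr (fun u => e (Lsym u) +
    (if u \in negs h then e (L0 n) - e (Lsym u) *+ 2 else 0))) => [|u _]; last first.
  by case: (u \in negs h); rewrite ?addr0 // mulr2n opprD addrCA addNKr.
rewrite big_split /= -big_mkcondr [X in _ + X](eq_bigl (mem (T :&: negs h))).
  by rewrite sumrB sumr_const sumrMnl addrA.
by move=> u; rewrite !inE.
Qed.

Lemma Phi_lsum_sub_even h T : h \in WB n -> {mono tau h : u / u \in T} ->
  ~~ odd #|T :&: negs h| -> exists D, Phi h *m lsum T - lsum T = D *+ 2.
Proof.
move=> hB hT ev; exists (e (L0 n) *+ #|T :&: negs h|./2 - lsum (T :&: negs h)).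
by rewrite Phi_lsum // -{1}(even_halfK ev) -muln2 mulrnA mulrnBl addrC -!addrA addKr.
Qed.

Lemma Phi_entry a i j : Phi a i j = (Phi a *m e j) i 0.
Proof. by rewrite Phi_e mxE. Qed.

Lemma Phi_Lsym_Lm1 a u : Phi a (Lsym u) (Lm1 n) = - (u \in negs a)%:R.
Proof.
by rewrite Phi_entry Phi_e /phicol eqxx -/(lsum _) !mxE lsum_Lsym /= mulr0 add0r.
Qed.

Lemma Phi_Lsym_Lsym a u k : a \in WB n ->
  Phi a (Lsym u) (Lsym k) = if k == tau a u then (-1) ^+ (u \in negs a) else 0.
Proof.
move=> aB; have [tinv _ tK] := injF_bij (tau_inj aB).
rewrite Phi_entry Phi_Lsym -[k]tK phisym_tau // (inj_eq (tau_inj aB)) eq_sym.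
have [<-|ne] := eqVneq u (tinv k); case: (_ \in negs a);
  by rewrite !mxE (inj_eq Lsym_inj) ?eqxx ?(negbTE ne) /= ?subrr ?add0r.
Qed.

Lemma Phi_mulmx_Lsym a x u : a \in WB n ->
  (Phi a *m x) (Lsym u) 0 =
  (-1) ^+ (u \in negs a) * x (Lsym (tau a u)) 0 - (u \in negs a)%:R * x (Lm1 n) 0.
Proof.
move=> aB; rewrite mxE !big_ord_recl Phi_Lsym_Lm1 Phi_entry Phi_L0 eE /=.
rewrite mul0r add0r mulNr addrC; congr (_ + _).
rewrite (bigD1 (tau a u)) //= Phi_Lsym_Lsym // eqxx big1 ?addr0 // => k /negbTE nk.
by rewrite Phi_Lsym_Lsym // nk mul0r.
Qed.
End PicardAction.

Section H1Obstruction.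
Variable n : nat.
Implicit Types (a b h : {perm symb n}) (u v : 'I_n) (T : {set 'I_n}).
Implicit Types (x m : 'cV[int]_n.+2).

Lemma Phi_fixed_flip h x p : h \in WB n -> Phi h *m x = x ->
  fconnect h (p, true) (p, false) -> x (Lsym p) 0 *+ 2 + x (Lm1 n) 0 = 0.
Proof.
move=> hB hx hp; pose y u := x (Lsym u) 0 *+ 2 + x (Lm1 n) 0.
have yE u : y u = (-1) ^+ (u \in negs h) * y (tau h u).
  by rewrite /y -{1}hx Phi_mulmx_Lsym //; case: (u \in negs h) => /=; lia.
(* [Y] is constant on [h]-orbits of symbols, and [p^+], [p^-] share one. *)
pose Y (z : symb n) := if z.2 then y z.1 else - y z.1.
have Yh : invariant h Y =1 xpredT.
  case=> u c; rewrite inE /= permWB // /Y (yE u).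
  by case: c; case: (_ \in _) => /=; rewrite ?eqxx //; apply/eqP; lia.
have := fconnect_invariant Yh hp; rewrite /Y /= -/(y p); lia.
Qed.

Definition halfv x : 'cV[int]_n.+2 := map_mx (fun z : int => (z %/ 2)%Z) x.

Lemma halfvK x : halfv (x *+ 2) = x.
Proof. by apply/matrixP => i j; rewrite mxE mulmxnE -[_ *+ 2]mulr_natr mulzK. Qed.

Lemma H1_vanish_fixed h T : h \in WB n -> {mono tau h : u / u \in T} ->
  ~~ odd #|T :&: negs h| -> H1_vanish (<[h]>%G : {set {perm symb n}}) ->
  exists m, Phi h *m (lsum T - m *+ 2) = lsum T - m *+ 2.
Proof.
move=> hB hT ev H1.
pose M a := Phi a *m lsum T - lsum T.
have MM a b : a \in WB n -> M (a * b)%g = M a + Phi a *m M b.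
  by move=> aB; rewrite /M Phi_lsumM // mulmxBr [RHS]addrC -addrA addKr.
have /subsetP hWB : <[h]>%g \subset WB n by rewrite cycle_subG.
have M2 a : a \in <[h]>%g -> M a = halfv (M a) *+ 2.
  move=> /cycleP[k ->]; suff [D ->] : exists D, M (h ^+ k)%g = D *+ 2 by rewrite halfvK.
  elim: k => [|k [D IH]]; first by exists 0; rewrite /M Phi1_lsum subrr mul0rn.
  have [D1 E1] := Phi_lsum_sub_even hB hT ev.
  by exists (D1 + Phi h *m D); rewrite expgS MM // IH raddfMn /M E1 mulrnDl.
have [|m Hm] := H1 (fun a => halfv (M a)).
  move=> a b aG bG; rewrite MM ?hWB // (M2 a aG) (M2 b bG) raddfMn -mulrnDl.
  by rewrite !halfvK.
exists m; have := M2 h (cycle_id h); rewrite Hm ?cycle_id // /M.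
by move=> E; rewrite mulmxBr raddfMn -[Phi h *m lsum T](subrK (lsum T)) E mulrnBl
  addrC -addrA addKr addrC.
Qed.

Lemma not_H1_vanish h T p q : h \in WB n -> {mono tau h : u / u \in T} ->
  ~~ odd #|T :&: negs h| -> p \in T -> q \notin T ->
  fconnect h (p, true) (p, false) -> fconnect h (q, true) (q, false) ->
  ~ H1_vanish (<[h]>%G : {set {perm symb n}}).
Proof.
move=> hB hT ev pT qT hp hq /(H1_vanish_fixed hB hT ev)[m hm].
have := Phi_fixed_flip hB hm hp; have := Phi_fixed_flip hB hm hq.
(* [x_p] is odd and [x_q] is even, yet both equal [- x_{-1} / 2]. *)
rewrite !mxE !lsum_Lsym pT (negbTE qT); lia.
Qed.

End H1Obstruction.

Lemma sign_cardI (T : finType) (A B : {set T}) :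
  (-1) ^+ #|A :&: B| = \prod_(x in A) (-1) ^+ (x \in B) :> int.
Proof.
rewrite -prodr_const [LHS]big_mkcond [RHS]big_mkcond /=.
by apply: eq_bigr => x _; rewrite inE; case: (x \in A); case: (x \in B).
Qed.

Lemma mono_fixed (T : finType) (f : T -> T) (A : {set T}) :
  injective f -> {in A, forall x, f x = x} -> {mono f : x / x \in A}.
Proof.
move=> finj fA x; apply/idP/idP => [fxA|/fA -> //].
by rewrite -(finj _ _ (fA _ fxA)).
Qed.

Section NegativeCycles.
Variable n : nat.
Implicit Types (g h : {perm symb n}) (u w : 'I_n) (S : {set 'I_n}).

Definition neg_cycles g := [set S in cycles g | sigma_cyc g S == -1].

Lemma sigma_cycN1 g S : (sigma_cyc g S == -1) = odd #|S :&: negs g|.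
Proof. by rewrite /sigma_cyc -signr_odd; case: odd. Qed.

Lemma neg_cyclesE g S :
  (S \in neg_cycles g) = (S \in cycles g) && odd #|S :&: negs g|.
Proof. by rewrite inE sigma_cycN1. Qed.

Lemma neg_cycles_sub g : neg_cycles g \subset cycles g.
Proof. by apply/subsetP => S; rewrite neg_cyclesE => /andP[]. Qed.

Lemma sigma_cyc_sign g S : sigma_cyc g S = (-1) ^+ (sigma_cyc g S == -1).
Proof. by rewrite sigma_cycN1 signr_odd. Qed.

Lemma neg_cycle_flip g S w : g \in WB n -> S \in neg_cycles g -> w \in S ->
  (g ^+ #|S|)%g (w, true) = (w, false).
Proof.
move=> gB; rewrite neg_cyclesE => /andP[/imsetP[u _ ->] odd_neg] wS.
by rewrite perm_cycle_length // odd_neg.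
Qed.

Lemma neg_cycle_fconnect g S w : g \in WB n -> S \in neg_cycles g -> w \in S ->
  fconnect g (w, true) (w, false).
Proof.
by move=> gB NS wS; rewrite -(neg_cycle_flip gB NS wS) permX fconnect_iter.
Qed.

Lemma flip_fixed h w : h (w, true) = (w, false) -> tau h w = w /\ w \in negs h.
Proof. by rewrite permWB_true => -[-> /negbFE]. Qed.

Lemma not_H1_vanish_three_flips h S : h \in WB n -> (2 < #|S|)%N ->
  {in S, forall w, h (w, true) = (w, false)} ->
  ~ H1_vanish (<[h]>%G : {set {perm symb n}}).
Proof.
move=> hB /card_gt2P[p [q [r [[pS qS rS] [pq qr rp]]]]] hS.
have hT : {in [set p; q], forall w, h (w, true) = (w, false)}.
  by move=> w /set2P[] ->; apply: hS.
apply: (not_H1_vanish (T := [set p; q]) (p := p) (q := r) hB).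
- by apply: mono_fixed (tau_inj hB) _ => w /hT /flip_fixed[].
- rewrite (setIidPl _) ?cards2 ?pq //.
  by apply/subsetP => w /hT /flip_fixed[].
- exact: set21.
- by rewrite !inE negb_or; apply/andP; split; [exact: rp | rewrite eq_sym].
- by rewrite -(hS p pS) fconnect1.
- by rewrite -(hS r rS) fconnect1.
Qed.

End NegativeCycles.

Section NegativeCycleBounds.
Variables (n : nat) (g : {perm symb n}).
Hypothesis gB : g \in WB n.
Implicit Types (u w : 'I_n) (S : {set 'I_n}).

Lemma neg_cycle_card_le2 S :
  (forall i, H1_vanish (<[(g ^+ i)%g]>%G : {set {perm symb n}})) ->
  S \in neg_cycles g -> (#|S| <= 2)%N.
Proof.
move=> H1 NS; rewrite leqNgt; apply/negP => S3.
apply: (not_H1_vanish_three_flips (groupX _ gB) S3 _ (H1 #|S|)) => w.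
exact: neg_cycle_flip.
Qed.

Lemma neg_cycle_card2_eq S1 S2 :
  H1_vanish (<[(g ^+ 2)%g]>%G : {set {perm symb n}}) ->
  S1 \in neg_cycles g -> S2 \in neg_cycles g -> #|S1| = 2%N -> #|S2| = 2%N ->
  S1 = S2.
Proof.
move=> H1 NS1 NS2 c1 c2; have [//|S12] := eqVneq S1 S2; exfalso.
have /subsetP cyc := neg_cycles_sub g.
have dis : [disjoint S1 & S2] by apply: cycles_disjoint gB (cyc _ NS1) (cyc _ NS2) S12.
apply: (not_H1_vanish_three_flips (S := S1 :|: S2) (groupX 2 gB) _ _ H1).
  by rewrite cardsU (disjoint_setI0 dis) cards0 c1 c2.
move=> w /setUP[] wS; [rewrite -c1 | rewrite -c2]; exact: neg_cycle_flip.
Qed.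


Lemma card_neg_cycles_le2 :
  H1_vanish (<[g]>%G : {set {perm symb n}}) -> (#|neg_cycles g| <= 2)%N.
Proof.
move=> H1; rewrite leqNgt; apply/negP.
move=> /card_gt2P[S1 [S2 [S3 [[N1 N2 N3] [n12 n23 n31]]]]].
have /subsetP cyc := neg_cycles_sub g.
have [/imsetP[p _ E1] /imsetP[r _ E3]] := conj (cyc _ N1) (cyc _ N3).
have pS1 : p \in S1 by rewrite E1 cyc_of_id.
have rS3 : r \in S3 by rewrite E3 cyc_of_id.
have dis S S' : S \in neg_cycles g -> S' \in neg_cycles g -> S != S' ->
    [disjoint S & S'].
  by move=> NS NS'; apply: cycles_disjoint gB (cyc _ NS) (cyc _ NS').
have odd_neg S : S \in neg_cycles g -> odd #|S :&: negs g|.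
  by rewrite neg_cyclesE => /andP[].
apply: (not_H1_vanish (T := S1 :|: S2) gB _ _ _ _ (neg_cycle_fconnect gB N1 pS1)
  (neg_cycle_fconnect gB N3 rS3) H1).
- move=> u; rewrite !in_setU.
  by rewrite (cycles_mono gB (cyc _ N1)) (cycles_mono gB (cyc _ N2)).
- rewrite setIUl cardsU setIACA (disjoint_setI0 (dis _ _ N1 N2 n12)) set0I cards0.
  by rewrite subn0 oddD !odd_neg.
- by rewrite in_setU pS1.
- have n13 : S1 != S3 by rewrite eq_sym.
  rewrite in_setU (disjointFl (dis _ _ N1 N3 n13) rS3).
  by rewrite (disjointFl (dis _ _ N2 N3 n23) rS3).
Qed.

Lemma sigma_prod : sigma g = \prod_(S in cycles g) sigma_cyc g S.
Proof.
rewrite /sigma -[negs g]setTI (sign_cardI [set: _] (negs g)).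
rewrite (partition_big (cyc_of g) (mem (cycles g))) => [|u _]; last exact: imset_f.
apply: eq_bigr => _ /imsetP[u _ ->]; rewrite /sigma_cyc (sign_cardI (cyc_of g u)).
apply: eq_bigl => v; rewrite inE /=; apply/eqP/idP => [<-|/(cyc_of_eq gB)//].
exact: cyc_of_id.
Qed.

Lemma neg_cycles_even : sigma g = 1 -> ~~ odd #|neg_cycles g|.
Proof.
rewrite sigma_prod (eq_bigr (fun S => (-1) ^+ (S \in neg_cycles g))) => [|S CS].
  rewrite -(sign_cardI (cycles g)) (setIidPr (neg_cycles_sub g)) -signr_odd.
  by case: odd => // /eqP.
by rewrite sigma_cyc_sign inE CS.
Qed.

End NegativeCycleBounds.

Lemma eq_fconnect_in (T : finType) (f f' : T -> T) x :
  {in fconnect f x, f =1 f'} -> fconnect f x =1 fconnect f' x.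
Proof.
move=> ff'; have iterE k : iter k f' x = iter k f x.
  by elim: k => //= k ->; apply/esym/ff'; rewrite inE fconnect_iter.
move=> y; apply/idP/idP => /iter_findex <-; first by rewrite -iterE fconnect_iter.
by rewrite iterE fconnect_iter.
Qed.

Lemma cover2 (T : finType) (A B : {set T}) : cover [set A; B] = A :|: B.
Proof.
apply/setP => x; apply/bigcupP/setUP => [[S /set2P[] -> xS]|[] xS]; [left|right|..] => //.
  by exists A; rewrite ?set21.
by exists B; rewrite ?set22.
Qed.

Section Factorization.
Variables (n : nat) (g : {perm symb n}).
Hypothesis gB : g \in WB n.
Implicit Types (b P : {perm symb n}) (u v : 'I_n).
Local Notation D := (cover (neg_cycles g)).

Lemma mem_cover_neg_cycles u : (u \in D) = (cyc_of g u \in neg_cycles g).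
Proof.
apply/bigcupP/idP => [[S NS uS]|]; last by exists (cyc_of g u); rewrite ?cyc_of_id.
have /subsetP/(_ S NS)/imsetP[w _ Sw] := neg_cycles_sub g.
by rewrite Sw in uS NS; rewrite (cyc_of_eq gB uS).
Qed.

Lemma all_cyc_even_off_neg b : b \in WB n ->
  {in D, forall u, b (u, true) = (u, true)} ->
  (forall u, u \notin D -> b (u, true) = g (u, true)) -> all_cyc_even b.
Proof.
move=> bB bD bg _ /imsetP[u _ ->]; have [uD|uD] := boolP (u \in D).
  have [tbu nbu] : tau b u = u /\ u \notin negs b by rewrite /tau inE bD ?negbK.
  rewrite /sigma_cyc cyc_of_fixed // (_ : _ :&: _ = set0) ?cards0 //.
  by apply/setP => v; rewrite !inE; case: eqP => // ->; rewrite bD.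
have offD v : v \in cyc_of g u -> v \notin D.
  by move=> vS; rewrite mem_cover_neg_cycles (cyc_of_eq gB vS) -mem_cover_neg_cycles.
have Sb : cyc_of b u = cyc_of g u.
  apply/setP => v; rewrite !inE; symmetry; apply: eq_fconnect_in => w wS.
  by rewrite /tau bg // offD // inE.
have Eneg : cyc_of b u :&: negs b = cyc_of g u :&: negs g.
  rewrite Sb; apply/setP => v; rewrite !inE.
  by case vS: (fconnect _ u v) => //; rewrite bg // offD // inE.
rewrite /sigma_cyc Eneg -/(sigma_cyc g _) sigma_cyc_sign.
by move: uD; rewrite mem_cover_neg_cycles inE imset_f //= => /negbTE ->.
Qed.

Lemma neg_cycles_factor P : P \in WB n ->
  (forall u, u \notin D -> P (u, true) = (u, true)) ->
  {in D, forall u, g (u, true) = P (u, true)} ->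
  exists b, [/\ b \in WB n, all_cyc_even b, {in D, forall u, fixes_idx b u} &
                g = (P * b)%g].
Proof.
move=> PB PD gP; pose b := (P^-1 * g)%g; exists b.
have bP x : b (P x) = g x by rewrite permM permK.
have bD x : x.1 \in D -> b x = x.
  move=> xD; rewrite -(permKV P x) bP; case E: (P^-1 x)%g => [w c].
  have wD : w \in D.
    apply: contraTT xD => wD.
    by rewrite -(permKV P x) E (permWB_eq (h := 1%g)) ?group1 ?perm1 ?PD.
  exact: permWB_eq gB PB (gP w wD).
split.
- by rewrite groupM ?groupV.
- apply: all_cyc_even_off_neg => [||u uD]; first by rewrite groupM ?groupV.
    by move=> u uD; apply: bD.
  by rewrite -{1}(PD _ uD) bP.
- by move=> u uD; split; apply: bD.
- by rewrite mulKVg.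
Qed.

End Factorization.

Section NormalForms.
Variable n : nat.
Implicit Types (g : {perm symb n}).

Definition type1 g := exists i1 i2 b,
  [/\ i1 != i2, b \in WB n, all_cyc_even b, fixes_idx b i1 /\ fixes_idx b i2 &
      g = (cc i1 * cc i2 * b)%g].

Definition type2 g := exists i1 i2 i3 b,
  [/\ uniq [:: i1; i2; i3], b \in WB n, all_cyc_even b,
      [/\ fixes_idx b i1, fixes_idx b i2 & fixes_idx b i3] &
      g = (cc i1 * cc i2 * sw i2 i3 * b)%g].

Definition type3 g := [/\ g \in WB n & all_cyc_even g].

End NormalForms.

Section NegativeCycleShapes.
Variables (n : nat) (g : {perm symb n}).
Implicit Types (S : {set 'I_n}).
Hypothesis gB : g \in WB n.

Lemma neg_cycle_card1 S : S \in neg_cycles g -> #|S| = 1%N ->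
  exists i, S = [set i] /\ g (i, true) = (i, false).
Proof.
move=> NS /eqP/cards1P[i Si]; exists i; split => //.
have iS : i \in S by rewrite Si set11.
by rewrite -(neg_cycle_flip gB NS iS) Si cards1 expg1.
Qed.

Lemma neg_cycle_card2 S : S \in neg_cycles g -> #|S| = 2%N ->
  exists i j, [/\ S = [set i; j], i != j, g (i, true) = (j, false) &
                  g (j, true) = (i, true)].
Proof.
move=> NS c2; move: (NS); rewrite neg_cyclesE => /andP[/imsetP[u _ Su] odd_neg].
have [a] : exists a, a \in S :&: negs g by apply/card_gt0P; case: #|_| odd_neg.
rewrite inE => /andP[aS aN]; exists a, (tau g a).
have Sa : S = cyc_of g a by rewrite Su; apply/esym/cyc_of_eq; rewrite -?Su.
have ga : g (a, true) = (tau g a, false) by rewrite permWB_true aN.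
have ta : a != tau g a.
  by apply/eqP => ta; move: c2; rewrite Sa (cyc_of_fixed (esym ta)) cards1.
split => //.
  apply/eqP; rewrite eq_sym eqEcard c2 cards2 ta andbT.
  by apply/subsetP => v /set2P[] ->; rewrite // Sa cyc_of_tau // cyc_of_id.
have := neg_cycle_flip gB NS aS; rewrite c2 expgS expg1 permM ga.
rewrite -[(tau g a, false)]/(flip (tau g a, true)) WB_flip //.
by move/(congr1 (@flip n)); rewrite flipK.
Qed.

Lemma type1_of_neg_cycles i1 i2 : i1 != i2 ->
  neg_cycles g = [set [set i1]; [set i2]] ->
  g (i1, true) = (i1, false) -> g (i2, true) = (i2, false) -> type1 g.
Proof.
move=> i12 Ng g1 g2; rewrite /type1.
suff [b [bB be bD ->]] : exists b, [/\ b \in WB n, all_cyc_even b,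
    {in cover (neg_cycles g), forall u, fixes_idx b u} &
    g = (cc i1 * cc i2 * b)%g].
  exists i1, i2, b; split => //.
  by split; apply: bD; rewrite Ng cover2 !inE eqxx ?orbT.
apply: neg_cycles_factor => //; first by apply: groupM; apply: cc_WB.
all: rewrite Ng cover2 => u.
  by rewrite !inE negb_or => /andP[/negbTE u1 /negbTE u2]; rewrite permM !ccE u1 u2.
by case/setUP => /set1P ->;
  rewrite permM !ccE eqxx ?(negbTE i12) 1?eq_sym ?(negbTE i12).
Qed.

Lemma type2_of_neg_cycles i1 i2 i3 : uniq [:: i1; i2; i3] ->
  neg_cycles g = [set [set i1]; [set i2; i3]] ->
  g (i1, true) = (i1, false) -> g (i2, true) = (i3, false) ->
  g (i3, true) = (i2, true) -> type2 g.
Proof.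
rewrite /= !inE negb_or andbT => /andP[/andP[i12 i13] i23] Ng g1 g2 g3.
suff [b [bB be bD ->]] : exists b, [/\ b \in WB n, all_cyc_even b,
    {in cover (neg_cycles g), forall u, fixes_idx b u} &
    g = (cc i1 * cc i2 * sw i2 i3 * b)%g].
  exists i1, i2, i3, b; split => //; first by rewrite /= !inE negb_or i12 i13 i23.
  by split; apply: bD; rewrite Ng cover2 !inE eqxx ?orbT.
have [i21 i31 i32] : [/\ i2 != i1, i3 != i1 & i3 != i2] by split; rewrite eq_sym.
apply: neg_cycles_factor => //.
  by apply: groupM; [apply: groupM; apply: cc_WB | apply: sw_WB].
all: rewrite Ng cover2 => u.
  rewrite !inE !negb_or => /andP[/negbTE u1 /andP[/negbTE u2 /negbTE u3]].
  by rewrite permM [(cc i1 * cc i2)%g _]permM !ccE swE u1 u2 u3.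
by rewrite !inE => /orP[|/orP[]] /eqP ->;
  rewrite permM [(cc i1 * cc i2)%g _]permM !ccE swE eqxx
  ?(negbTE i12) ?(negbTE i13) ?(negbTE i21) ?(negbTE i31) ?(negbTE i32).
Qed.

End NegativeCycleShapes.

Section Classification.
Variables (n : nat) (g : {perm symb n}).
Hypotheses (gD : g \in WD n)
  (H1 : forall i, H1_vanish (<[(g ^+ i)%g]>%G : {set {perm symb n}})).
Implicit Types (S : {set 'I_n}).

Let gB : g \in WB n. Proof. by case/setIdP: gD. Qed.

Lemma neg_cycle_card12 S : S \in neg_cycles g -> #|S| = 1%N \/ #|S| = 2%N.
Proof.
move=> NS; have := neg_cycle_card_le2 gB H1 NS.
move: NS; rewrite neg_cyclesE => /andP[/imsetP[u _ ->] _].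
have : (0 < #|cyc_of g u|)%N by apply/card_gt0P; exists u; apply: cyc_of_id.
by case: #|_| => [|[|[|]]]; auto.
Qed.

Lemma card_neg_cycles02 : #|neg_cycles g| = 0%N \/ #|neg_cycles g| = 2%N.
Proof.
have H1g : H1_vanish (<[g]>%G : {set {perm symb n}}).
  by have := @H1 1%N; rewrite expg1.
have := neg_cycles_even gB; case/setIdP: gD => _ /eqP /[swap] /[apply].
by have := card_neg_cycles_le2 gB H1g; case: #|_| => [|[|[|]]]; auto.
Qed.

Lemma WD_H1_classification : [\/ type1 g, type2 g | type3 g].
Proof.
case: card_neg_cycles02 => [/cards0_eq N0|/eqP/cards2P[S1 [S2 [S12 NE]]]].
  constructor 3; split => // S CS; rewrite sigma_cyc_sign.
  by move/setP/(_ S): N0; rewrite inE CS in_set0 /= => ->.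
have [NS1 NS2] : S1 \in neg_cycles g /\ S2 \in neg_cycles g.
  by rewrite NE !inE !eqxx orbT.
wlog c1 : S1 S2 S12 NE NS1 NS2 / #|S1| = 1%N.
  move=> W; case: (neg_cycle_card12 NS1) => c1; first exact: W _ _ S12 NE NS1 NS2 c1.
  case: (neg_cycle_card12 NS2) => c2.
    by apply: (W S2 S1) => //; rewrite 1?eq_sym // NE setUC.
  by move/eqP: S12; have := neg_cycle_card2_eq gB (@H1 2%N) NS1 NS2 c1 c2.
have [i1 [E1 g1]] := neg_cycle_card1 gB NS1 c1; rewrite E1 in NE S12 NS1.
case: (neg_cycle_card12 NS2) => c2.
  have [i2 [E2 g2]] := neg_cycle_card1 gB NS2 c2; rewrite E2 in NE S12.
  by constructor 1; apply: type1_of_neg_cycles g1 g2 => //; apply: contraNneq S12 => ->.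
have [i2 [i3 [E2 i23 g2 g3]]] := neg_cycle_card2 gB NS2 c2; rewrite E2 in NE S12 NS2.
constructor 2; apply: type2_of_neg_cycles g1 g2 g3 => //.
have /subsetP cyc := neg_cycles_sub g.
have := cycles_disjoint gB (cyc _ NS1) (cyc _ NS2) S12.
by move/disjointFr/(_ (set11 i1)); rewrite !inE /= !inE i23 => /negbT ->.
Qed.

End Classification.

Theorem corollary4p2 (n : nat) (g : {perm symb n}) :
  g \in WD n ->
  (forall i : nat, H1_vanish (<[(g ^+ i)%g]>%G : {set {perm symb n}})) ->
  (* pr(beta) has length <= 2 when sigma(beta) = -1 *)
  (forall S, S \in cycles g -> sigma_cyc g S = -1 -> (len_cyc S <= 2)%N) /\
  (* at most one such cycle of length 2 *)
  (forall S1 S2, S1 \in cycles g -> S2 \in cycles g ->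
     sigma_cyc g S1 = -1 -> sigma_cyc g S2 = -1 ->
     len_cyc S1 = 2%N -> len_cyc S2 = 2%N -> S1 = S2) /\
  (* up to conjugation in W(B_n), g is of type (1), (2) or (3) *)
  (exists2 h, h \in WB n &
     [\/ exists i1 i2 (b : {perm symb n}),
            [/\ i1 != i2, b \in WB n, all_cyc_even b,
                fixes_idx b i1 /\ fixes_idx b i2 &
                (g ^ h)%g = (cc i1 * cc i2 * b)%g],
         exists i1 i2 i3 (b : {perm symb n}),
            [/\ uniq [:: i1; i2; i3], b \in WB n, all_cyc_even b,
                [/\ fixes_idx b i1, fixes_idx b i2 & fixes_idx b i3] &
                (g ^ h)%g = (cc i1 * cc i2 * sw i2 i3 * b)%g]
       | exists b : {perm symb n},
            [/\ b \in WB n, all_cyc_even b & (g ^ h)%g = b]]).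
Proof.
move=> gD H1; have /setIdP[gB _] := gD.
have neg S : S \in cycles g -> sigma_cyc g S = -1 -> S \in neg_cycles g.
  by move=> CS s; rewrite inE CS s eqxx.
rewrite /len_cyc; split; [|split].
- by move=> S CS s; apply: (neg_cycle_card_le2 gB H1); apply: neg.
- move=> S1 S2 C1 C2 s1 s2.
  by apply: (neg_cycle_card2_eq gB (@H1 2%N)); apply: neg.
(* No conjugation is needed: the indices of the normal forms are arbitrary. *)
exists 1%g; rewrite ?group1 // conjg1.
by case: (WD_H1_classification gD H1) => [?|?|[]];
  [constructor 1 | constructor 2 | constructor 3; exists g].
Qed.
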